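(* For every integer $L\geq 0$, \[ \sum_{j=-\infty}^{\infty} q^{\binom{j-1}{2}} \left(\frac{j}{3}\right) {2L+1 \brack L+j}_q = q^L\,\frac{(-1;q^3)_L}{(-1;q)_L}\,\bigl(1+q-q^{L+1}\bigr), \] where $\binom{j-1}{2}=\frac{(j-1)(j-2)}{2}$.
   Context: For a variable $a$ and integer $n\ge 0$, $(a;q)_n=(1-a)(1-aq)\cdots(1-aq^{n-1})$ (with $(a;q)_0=1$). The $q$-binomial coefficient is ${A \brack B}_q=\frac{(q;q)_A}{(q;q)_B(q;q)_{A-B}}$ if $0\le B\le A$ are integers, and $0$ otherwise. $\left(\frac{j}{3}\right)$ is the Legendre symbol modulo 3: it equals $1$ if $j\equiv 1 \pmod 3$, $-1$ if $j\equiv -1\pmod 3$, and $0$ if $3\mid j$. *)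

From HB Require Import structures.
From mathcomp Require Import all_boot all_order all_algebra.
Set Implicit Arguments.
Unset Strict Implicit.
Unset Printing Implicit Defensive.
Import Order.TTheory GRing.Theory Num.Theory.
Local Open Scope ring_scope.

Definition QF := {fraction {poly rat}}.

Definition qv : QF := FracField.tofrac ('X : {poly rat}).

Definition qpoch {R : comPzRingType} (a q : R) (n : nat) : R :=
  \prod_(i < n) (1 - a * q ^+ i).

Definition qbinom {F : fieldType} (q : F) (A B : int) : F :=
  if (0 <= B) && (B <= A) then
    qpoch q q `|A|%N / (qpoch q q `|B|%N * qpoch q q `|A - B|%N)
  else 0.

Definition legendre3 (j : int) : int :=
  if (j %% 3)%Z == 1 then 1 else if (j %% 3)%Z == 2 then -1 else 0.

(* binom(j-1, 2) = (j-1)(j-2)/2, an exact integer division. *)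
Definition binom2m1 (j : int) : int := (((j - 1) * (j - 2)) %/ 2)%Z.

From HB Require Import structures.
From mathcomp Require Import all_boot all_order all_algebra.
From mathcomp Require Import ring zify.
Import GRing.Theory Num.Theory.
Local Open Scope ring_scope.
Set Implicit Arguments.
Unset Strict Implicit.

(* The sum is supported on 0 <= L + j <= 2L + 1. Writing k = L + j, its terms are, up
   to the factor q^(3 binom(L+1,2)), the coefficients c_k of Rothe's polynomial
   P_L = prod_(i <= 2L) (q^(L+1) + q^i X), each weighted by the Legendre symbol
   ((k - L)/3). This symbol is 3-periodic with zero sum over a period, so such a
   weighted sum only depends on P_L modulo 1 + X + X^2, i.e. on P_L(w) for a primitive
   cube root of unity w. Splitting off the first and last factors of P_(L+1) and using
   w^3 = 1 and (1 + x w)(1 + x w^2) = 1 - x + x^2 gives by induction, modulo 1 + X + X^2,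
     P_L = - q^(3 binom(L+1,2)) prod_(i < L) (1 - q^i + q^(2i))
             * X^L (1 + q^L X^2)(1 + q^(L+1) X^2),
   whose weighted sum is read off directly; the product is (-1;q^3)_L / (-1;q)_L. *)

Lemma legendre3_sum3 (j : int) :
  legendre3 j + legendre3 (j + 1) + legendre3 (j + 2) = 0.
Proof.
rewrite /legendre3 -(modzDml j 1) -(modzDml j 2).
have : (j %% 3)%Z \in [:: 0; 1; 2] by rewrite !inE; lia.
by rewrite !inE => /or3P[] /eqP ->.
Qed.

Lemma big_ord_support (V : nmodType) (n a m : nat) (f : nat -> V) :
  (a + m <= n)%N -> (forall i, (i < a)%N || (a + m <= i)%N -> f i = 0) ->
  \sum_(i < n) f i = \sum_(k < m) f (k + a)%N.
Proof.
move=> le_amn f_supp; rewrite -(big_mkord xpredT f).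
rewrite (@big_cat_nat _ _ _ a) ?(leq_trans (leq_addr m a)) //=.
rewrite [X in _ + X](@big_cat_nat _ _ _ (a + m)) ?leq_addr //=.
rewrite big_nat_cond big1 ?add0r; last first.
  by move=> i /andP[/andP[_ lt_ia] _]; rewrite f_supp ?lt_ia.
rewrite [X in _ + X]big_nat_cond [X in _ + X]big1 ?addr0; last first.
  by move=> i /andP[/andP[le_i _] _]; rewrite f_supp // le_i orbT.
by rewrite -{1}[a]add0n big_addn addKn big_mkord.
Qed.

Lemma bin2_mul2 k : ('C(k, 2) * 2 = k * (k - 1))%N.
Proof.
rewrite subn1 bin2 -[RHS]odd_double_half oddM.
by case: k => //= k; rewrite andNb add0n -muln2.
Qed.

Lemma dvdp_subM (R : idomainType) (d a b c e : {poly R}) :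
  d %| a - b -> d %| c - e -> d %| a * c - b * e.
Proof.
move=> dvd_ab dvd_ce; have -> : a * c - b * e = (a - b) * c + b * (c - e) by ring.
by apply: dvdp_add; [exact: dvdp_mulr | exact: dvdp_mull].
Qed.

Lemma qpochS (R : comPzRingType) (a q : R) n :
  qpoch a q n.+1 = qpoch a q n * (1 - a * q ^+ n).
Proof. by rewrite /qpoch big_ord_recr. Qed.

Lemma qpoch_N1_cube (R : comPzRingType) (q : R) n :
  qpoch (-1) (q ^+ 3) n = qpoch (-1) q n * \prod_(i < n) (1 - q ^+ i + q ^+ i ^+ 2).
Proof.
rewrite /qpoch -big_split /=; apply: eq_bigr => i _.
by rewrite -exprM mulnC exprM; ring.
Qed.

Definition cyclo3 {R : nzRingType} : {poly R} := 1 + 'X + 'X^2.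

Section LegendreSum.
Variable R : nzRingType.
Implicit Types (s : int) (c : R) (p r : {poly R}).

Definition legendre_sum s p : R :=
  \sum_(i < size p) p`_i * (legendre3 (i%:Z + s))%:~R.

Lemma legendre_sumE s p n : (size p <= n)%N ->
  legendre_sum s p = \sum_(i < n) p`_i * (legendre3 (i%:Z + s))%:~R.
Proof.
move=> le_p_n; rewrite /legendre_sum.
rewrite (big_ord_widen n (fun i => p`_i * (legendre3 (i%:Z + s))%:~R) le_p_n).
rewrite big_mkcond /=; apply: eq_bigr => i _; case: ltnP => // le_p_i.
by rewrite nth_default ?mul0r.
Qed.

Lemma legendre_sumZ s c p : legendre_sum s (c *: p) = c * legendre_sum s p.
Proof.
rewrite (legendre_sumE s (size_scale_leq c p)) /legendre_sum mulr_sumr.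
by apply: eq_bigr => i _; rewrite coefZ mulrA.
Qed.

Lemma legendre_sumD s p r :
  legendre_sum s (p + r) = legendre_sum s p + legendre_sum s r.
Proof.
set n := maxn (size p) (size r).
rewrite (legendre_sumE s (size_polyD p r)).
rewrite (legendre_sumE s (leq_maxl _ _ : size p <= n)%N).
rewrite (legendre_sumE s (leq_maxr _ _ : size r <= n)%N) -big_split /=.
by apply: eq_bigr => i _; rewrite coefD mulrDl.
Qed.

Lemma legendre_sumXM s p : legendre_sum s ('X * p) = legendre_sum (s + 1) p.
Proof.
have le_Xp : (size ('X * p)%R <= (size p).+1)%N.
  by apply: leq_trans (size_polyMleq _ _) _; rewrite size_polyX.
rewrite (legendre_sumE s le_Xp) big_ord_recl coefXM mul0r add0r.
by apply: eq_bigr => i _; rewrite lift0 coefXM /= -addn1 PoszD addrAC -addrA.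
Qed.

Lemma legendre_sumXnM s n p :
  legendre_sum s ('X^n * p) = legendre_sum (s + n%:Z) p.
Proof.
elim: n s => [|n IHn] s; first by rewrite expr0 mul1r addr0.
by rewrite exprS -mulrA legendre_sumXM IHn -addrA -intS.
Qed.

Lemma legendre_sumC s c : legendre_sum s c%:P = c * (legendre3 s)%:~R.
Proof.
by rewrite -alg_polyC legendre_sumZ /legendre_sum size_poly1 big_ord1 coef1 mul1r add0r.
Qed.

Lemma legendre_sumCXM s c p :
  legendre_sum s (c%:P + 'X * p) = c * (legendre3 s)%:~R + legendre_sum (s + 1) p.
Proof. by rewrite legendre_sumD legendre_sumC legendre_sumXM. Qed.

Lemma legendre_sum_mul_cyclo3 s p : legendre_sum s (p * cyclo3) = 0.
Proof.
have -> : p * cyclo3 = p + 'X * p + 'X * ('X * p).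
  by rewrite /cyclo3 !mulrDr mulr1 expr2 mulrA !commr_polyX.
rewrite !legendre_sumD !legendre_sumXM /legendre_sum -!big_split /= big1 // => i _.
by rewrite -!mulrDr -!intrD !addrA -(addrA _ 1 1) legendre3_sum3 mulr0.
Qed.

End LegendreSum.

Lemma legendre_sum_eqmod (F : fieldType) s (p r : {poly F}) :
  cyclo3 %| p - r -> legendre_sum s p = legendre_sum s r.
Proof.
case/dvdpP=> h /eqP; rewrite subr_eq => /eqP ->.
by rewrite legendre_sumD legendre_sum_mul_cyclo3 add0r.
Qed.

Section Cyclo3Congruences.
Variable F : fieldType.
Implicit Types c : {poly F}.

Lemma cyclo3_addX c : cyclo3 %| (c + 'X) - 'X * (1 + c * 'X^2).
Proof. by apply/dvdpP; exists (c * (1 - 'X)); rewrite /cyclo3; ring. Qed.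

Lemma cyclo3_mulX c : cyclo3 %| (1 + c * 'X) * (1 + c * 'X^2) - (1 - c + c ^+ 2).
Proof. by apply/dvdpP; exists (c + c ^+ 2 * ('X - 1)); rewrite /cyclo3; ring. Qed.

Lemma cyclo3_addX_opp c : cyclo3 %| (c + 'X) + (1 + 'X^2) * (1 + c * 'X^2).
Proof. by apply/dvdpP; exists (1 + c * (1 - 'X + 'X^2)); rewrite /cyclo3; ring. Qed.

End Cyclo3Congruences.

Section QBinomial.
Variables (F : fieldType) (q : F).
Hypothesis qX_neq1 : forall k, 1 - q ^+ k.+1 != 0.
Implicit Types n k : nat.

Lemma qpoch_q_neq0 n : qpoch q q n != 0.
Proof.
elim: n => [|n IHn]; first by rewrite /qpoch big_ord0 oner_eq0.
by rewrite qpochS -exprS mulf_neq0.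
Qed.

Lemma qbinom_nat n k : qbinom q n k =
  if (k <= n)%N then qpoch q q n / (qpoch q q k * qpoch q q (n - k)) else 0.
Proof.
rewrite /qbinom lez_nat le0z_nat /=.
by case: ifP => le_kn //; rewrite (distnEl le_kn).
Qed.

Lemma qbinom_gt n k : (n < k)%N -> qbinom q n k = 0.
Proof. by move=> lt_nk; rewrite qbinom_nat leqNgt lt_nk. Qed.

Lemma qbinomn0 n : qbinom q n 0%N = 1.
Proof.
by rewrite qbinom_nat subn0 /qpoch big_ord0 mul1r divff ?qpoch_q_neq0.
Qed.

Lemma qbinomnn n : qbinom q n n = 1.
Proof.
by rewrite qbinom_nat leqnn subnn /qpoch big_ord0 mulr1 divff ?qpoch_q_neq0.
Qed.

Lemma qbinomSS n k :
  qbinom q n.+1 k.+1 = qbinom q n k.+1 + q ^+ (n - k) * qbinom q n k.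
Proof.
case: (ltngtP k n) => [lt_kn|lt_nk|<-]; last first.
- by rewrite [qbinom q k k.+1]qbinom_gt // !qbinomnn subnn mulr1 add0r.
- by rewrite !qbinom_gt ?mulr0 ?addr0 // ltnW.
rewrite !qbinom_nat ltnS lt_kn (ltnW lt_kn) subSS.
have -> : (n - k = (n - k.+1).+1)%N by lia.
rewrite !qpochS -!exprS.
have -> : q ^+ n.+1 = q ^+ k.+1 * q ^+ (n - k.+1).+1.
  by rewrite -exprD; congr (_ ^+ _); lia.
by field; rewrite !qpoch_q_neq0 !qX_neq1.
Qed.

End QBinomial.

Section Rothe.
Variables (F : fieldType) (q : F).
Implicit Types (y : F) (n k : nat).

Definition rothe y n : {poly F} := \prod_(i < n) (y%:P + (q ^+ i)%:P * 'X).

Lemma rotheS y n : rothe y n.+1 = rothe y n * (y%:P + (q ^+ n)%:P * 'X).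
Proof. by rewrite /rothe big_ord_recr. Qed.

Lemma rothe_recLR y n : rothe (q * y) n.+2 =
  ((q * y)%:P + 'X) * ((q ^+ n)%:P * rothe y n) * ((q * y)%:P + (q ^+ n.+1)%:P * 'X).
Proof.
rewrite rotheS /rothe big_ord_recl expr0 polyC1 mul1r; congr (_ * _ * _).
under eq_bigr => i _ do rewrite lift0 exprS !polyCM -mulrA -mulrDr.
by rewrite big_split prodr_const card_ord rmorphXn.
Qed.

Hypothesis qX_neq1 : forall k, 1 - q ^+ k.+1 != 0.

Lemma coef_rothe y n k :
  (rothe y n)`_k = q ^+ 'C(k, 2) * y ^+ (n - k) * qbinom q n k.
Proof.
elim: n k => [|n IHn] k.
  rewrite /rothe big_ord0 coef1; case: k => [|k]; first by rewrite qbinomn0 ?mulr1.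
  by rewrite qbinom_gt ?mulr0.
rewrite rotheS mulrDr coefD coefMC mulrA coefMX coefMC.
case: k => [|k]; first by rewrite IHn !qbinomn0 //= !subn0 !mulr1 addr0 -mulrA -exprSr.
rewrite /= !IHn qbinomSS // subSS binS bin1 exprD.
case: (ltngtP k n) => [lt_kn|lt_nk|->].
- have -> : q ^+ n = q ^+ k * q ^+ (n - k) by rewrite -exprD subnKC // ltnW.
  by rewrite -(subnSK lt_kn) !exprS; ring.
- by rewrite !qbinom_gt ?ltnS ?(ltnW lt_nk) //; ring.
- by rewrite (qbinom_gt q (ltnSn n)) subnn; ring.
Qed.

End Rothe.

Section RotheModCyclo3.
Variables (F : fieldType) (q : F).

Definition residue_coef L : F :=
  q ^+ (3 * 'C(L.+1, 2)) * \prod_(i < L) (1 - q ^+ i + q ^+ i ^+ 2).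

Definition rothe_residue L : {poly F} :=
  (residue_coef L)%:P * 'X^L * ((1 + (q ^+ L)%:P * 'X^2) * (1 + (q ^+ L.+1)%:P * 'X^2)).

Lemma residue_coefS L :
  residue_coef L.+1 = (q * q ^+ L) ^+ 3 * (1 - q ^+ L + q ^+ L ^+ 2) * residue_coef L.
Proof.
rewrite /residue_coef big_ord_recr /= binS bin1 mulnDr exprD !(mulnC 3) !exprM.
by rewrite -exprS; ring.
Qed.

Lemma rothe_residue_cyclo3 L :
  cyclo3 %| rothe q (q ^+ L.+1) (2 * L + 1) + rothe_residue L.
Proof.
elim: L => [|L IHL].
  rewrite /rothe_residue /residue_coef /rothe big_ord1 big_ord0.
  by rewrite !expr0 !mulr1 !polyC1 !mul1r cyclo3_addX_opp.
rewrite [q ^+ L.+2]exprS (_ : 2 * L.+1 + 1 = (2 * L + 1).+2)%N; last by lia.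
rewrite rothe_recLR; set P := rothe q _ _.
have e : q ^+ (2 * L + 1) = q * (q ^+ L * q ^+ L).
  by rewrite -expr2 -exprM -exprS mulnC addn1.
rewrite /rothe_residue residue_coefS !exprS e !(polyCM, polyCD, polyCN, polyC1).
set Q := q%:P; set a := (q ^+ L)%:P.
have step := dvdp_subM (cyclo3_addX (Q ^+ 2 * a)) (cyclo3_mulX a).
(* A multiple of [IHL] minus a multiple of [step]. *)
rewrite [X in _ %| X](_ : _ = (Q * a) ^+ 3 * ((Q ^+ 2 * a + 'X) * (1 + a * 'X)) *
      (P + rothe_residue L)
  - (Q * a) ^+ 3 * (residue_coef L)%:P * 'X^L * (1 + Q * a * 'X^2) *
    ((Q ^+ 2 * a + 'X) * ((1 + a * 'X) * (1 + a * 'X^2))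
     - 'X * (1 + Q ^+ 2 * a * 'X^2) * (1 - a + a ^+ 2))).
  by apply: dvdp_sub; apply: dvdp_mull.
by rewrite /rothe_residue /residue_coef (exprS q L) !polyCM -/a -/Q; ring.
Qed.

Lemma legendre_sum_rothe L :
  legendre_sum (- L%:Z) (rothe q (q ^+ L.+1) (2 * L + 1)) =
  residue_coef L * (q ^+ L + q ^+ L.+1 - q ^+ L * q ^+ L.+1).
Proof.
rewrite (@legendre_sum_eqmod _ _ _ (- rothe_residue L)) ?opprK ?rothe_residue_cyclo3 //.
rewrite -scaleN1r /rothe_residue -mulrA mul_polyC scalerA !legendre_sumZ.
rewrite legendre_sumXnM addNr (_ : (1 + _ * 'X^2) * (1 + _ * 'X^2) =
  1%:P + 'X * (0%:P + 'X * ((q ^+ L + q ^+ L.+1)%:P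
                             + 'X * (0%:P + 'X * (q ^+ L * q ^+ L.+1)%:P)))); last first.
  by rewrite polyCD polyCM polyC0 polyC1; ring.
by rewrite !legendre_sumCXM legendre_sumC /legendre3 /=; ring.
Qed.

End RotheModCyclo3.

Lemma binom2m1_sub (k L : nat) : (k <= 2 * L + 1)%N ->
  binom2m1 (k%:Z - L%:Z) =
  ('C(k, 2) + L.+1 * (2 * L + 1 - k))%N%:Z - (3 * 'C(L.+1, 2))%N%:Z.
Proof.
move=> le_k; rewrite /binom2m1.
have h1 := bin2_mul2 k; have := bin2_mul2 L.+1; rewrite subn1 /= => h2.
set r := (('C(k, 2) + L.+1 * (2 * L + 1 - k))%N%:Z - (3 * 'C(L.+1, 2))%N%:Z)%R.
have -> : ((k%:Z - L%:Z - 1) * (k%:Z - L%:Z - 2) = r * 2)%R by rewrite /r; nia.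
by rewrite mulzK.
Qed.

Section MainIdentity.
Variables (F : fieldType) (q : F).
Hypotheses (q_neq0 : q != 0) (qX_neq1 : forall k, 1 - q ^+ k.+1 != 0)
  (qX_neqN1 : forall k, 1 + q ^+ k != 0).

Definition legendre3_qbinom_term L (j : int) : F :=
  q ^ binom2m1 j * (legendre3 j)%:~R * qbinom q (2 * L + 1)%:Z (L%:Z + j).

Lemma expr_binom2m1 L k : (k <= 2 * L + 1)%N ->
  q ^ binom2m1 (k%:Z - L%:Z) * q ^+ (3 * 'C(L.+1, 2)) =
  q ^+ 'C(k, 2) * (q ^+ L.+1) ^+ (2 * L + 1 - k).
Proof.
by move=> le_k; rewrite binom2m1_sub // -exprM -exprD exprnP -expfzDr // subrK.
Qed.

Lemma legendre3_qbinom_sum L :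
  \sum_(i < 4 * L + 5)
     (let j : int := (i%:Z - (2 * L + 2)%:Z)%R in
      q ^ (binom2m1 j) * (legendre3 j)%:~R
         * qbinom q (2 * L + 1)%:Z (L%:Z + j))
  = q ^+ L * (qpoch (-1) (q ^+ 3) L / qpoch (-1) q L)
      * (1 + q - q ^+ L.+1).
Proof.
rewrite (big_ord_support (a := L + 2) (m := (2 * L + 1).+1)
    (f := fun i => legendre3_qbinom_term L (i%:Z - (2 * L + 2)%:Z))); last 2 first.
- by rewrite -ltnS; lia.
- move=> i supp_i; rewrite /legendre3_qbinom_term /qbinom.
  by case: ifP => [/andP[le0 le1]|]; [lia | rewrite mulr0].
apply: (mulIf (expf_neq0 (3 * 'C(L.+1, 2)) q_neq0)); rewrite mulr_suml.
rewrite (eq_bigr (fun k : 'I_(2 * L + 1).+1 =>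
  (rothe q (q ^+ L.+1) (2 * L + 1))`_k * (legendre3 (k%:Z + - L%:Z))%:~R)) => [|k _].
  rewrite -legendre_sumE ?legendre_sum_rothe /residue_coef ?qpoch_N1_cube; last first.
    by apply/leq_sizeP => j lt_j; rewrite coef_rothe // qbinom_gt ?mulr0.
  have qpoch_neq0 : qpoch (-1) q L != 0.
    by apply/prodf_neq0 => i _; rewrite mulN1r opprK.
  by rewrite exprS; field.
have le_k : (k <= 2 * L + 1)%N by rewrite -ltnS.
rewrite /legendre3_qbinom_term (_ : _ - _ = k%:Z - L%:Z); last by lia.
rewrite (_ : L%:Z + _ = k); last by lia.
by rewrite coef_rothe // -expr_binom2m1 //; ring.
Qed.

End MainIdentity.

Lemma qvX n : qv ^+ n = tofrac ('X^n : {poly rat}).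
Proof. by rewrite /qv rmorphXn. Qed.

Lemma qv_neq0 : qv != 0.
Proof. by rewrite tofrac_eq0 polyX_eq0. Qed.

Lemma oneBqvX_neq0 k : 1 - qv ^+ k.+1 != 0.
Proof.
rewrite qvX -tofrac1 -tofracB tofrac_eq0; apply/eqP => /(congr1 (horner^~ 0)).
by rewrite !hornerE expr0n subr0 => /eqP; rewrite oner_eq0.
Qed.

Lemma oneDqvX_neq0 k : 1 + qv ^+ k != 0.
Proof.
rewrite qvX -tofrac1 -tofracD tofrac_eq0; apply/eqP => /(congr1 (horner^~ 1)).
by rewrite !hornerE expr1n => /eqP; rewrite -mulr2n pnatr_eq0.
Qed.

Theorem theorem2p2 (L : nat) :
  \sum_(i < 4 * L + 5)
     (let j : int := (i%:Z - (2 * L + 2)%:Z)%R in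
      qv ^ (binom2m1 j) * (legendre3 j)%:~R
         * qbinom qv (2 * L + 1)%:Z (L%:Z + j))
  = qv ^+ L * (qpoch (-1) (qv ^+ 3) L / qpoch (-1) qv L)
      * (1 + qv - qv ^+ L.+1).
Proof.
exact: (legendre3_qbinom_sum qv_neq0 oneBqvX_neq0 oneDqvX_neq0).
Qed.
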